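(* Let $\sigma(x)=\operatorname{sgn}(x)x^2$. Let $x_0,y_0$ be positive real numbers such that (i) $y_0$ is a rational number which is not a square in $\mathbb{Q}$; (ii) $x_0=a_0+b_0\sqrt{y_0}$ with $a_0\neq0$ and $|b_0|\geq1$ rational numbers; (iii) $y_0>x_0^2$. Then $(x_0,y_0)$ is $\sigma$-irrational. In particular $(-1+\sqrt2,2)$ is $\sigma$-irrational.
   Context: $h_\sigma(x,y)=(x+\sigma^{-1}(y),y)$, $v_\sigma(x,y)=(x,\sigma(x)+y)$. The $\sigma$-rational lines are the axes $Ox=\mathbb{R}\times\{0\}$, $Oy=\{0\}\times\mathbb{R}$, the sets $m(Ox)$ with $m$ in the monoid generated by $h_\sigma,v_\sigma$, and the sets $m(Oy)$ with $m$ in the monoid generated by $h_\sigma^{-1},v_\sigma^{-1}$; a point is $\sigma$-irrational if it lies on none of them. *)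

From Stdlib Require Import Reals QArith Qreals List.
Open Scope R_scope.

Definition sgn (x : R) : R :=
  if Rlt_dec 0 x then 1 else if Rlt_dec x 0 then -1 else 0.

Definition sigma (x : R) : R := sgn x * x ^ 2.

Definition sigma_inv (y : R) : R := sgn y * sqrt (Rabs y).

Definition h_sigma (p : R * R) : R * R := (fst p + sigma_inv (snd p), snd p).
Definition v_sigma (p : R * R) : R * R := (fst p, sigma (fst p) + snd p).
Definition h_sigma_inv (p : R * R) : R * R := (fst p - sigma_inv (snd p), snd p).
Definition v_sigma_inv (p : R * R) : R * R := (fst p, snd p - sigma (fst p)).

(* Elements of the monoid generated by two maps f, g: compositions of finite
   words (true = f, false = g); the empty word is the identity. *)
Fixpoint word_map (f g : R * R -> R * R) (w : list bool) : R * R -> R * R :=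
  match w with
  | nil => fun p => p
  | b :: w' => fun p => (if b then f else g) (word_map f g w' p)
  end.

Definition Ox (p : R * R) : Prop := snd p = 0.
Definition Oy (p : R * R) : Prop := fst p = 0.

Definition on_sigma_rational_line (p : R * R) : Prop :=
  Ox p \/ Oy p \/
  (exists w q, Ox q /\ p = word_map h_sigma v_sigma w q) \/
  (exists w q, Oy q /\ p = word_map h_sigma_inv v_sigma_inv w q).

Definition sigma_irrational (p : R * R) : Prop := ~ on_sigma_rational_line p.

Definition is_rational (x : R) : Prop := exists q : Q, x = Q2R q.

(* Write u = x / sqrt y for (x, y) in the open first quadrant: h_sigma acts on
   ratios by u |-> u + 1 and v_sigma by u |-> u / sqrt (1 + u^2).  Along the orbit
   of the positive x-axis under h_sigma and v_sigma the ratio is therefore always a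
   root of a rational polynomial whose complex roots are all real: a shift keeps
   this, and so does the algebraic substitution realising v_sigma, which moreover
   puts every root in [-1, 1].  The ratio u0 of (x0, y0) lies in (0, 1), so a last
   letter h_sigma (giving u >= 1) is impossible, and after a last letter v_sigma the
   conjugate 2 b0 - u0 of u0 = b0 + (a0 / y0) sqrt y0 over Q would be a root of
   absolute value > 1.  The other sigma-rational lines stay in closed quadrants
   missing (x0, y0). *)

From Stdlib Require Import Reals QArith Qreals RMicromega Lra Lia.
From Coquelicot Require Import Complex.
Open Scope R_scope.

Inductive qpoly : Type :=
  | QX
  | QC (c : Q)
  | QAdd (p q : qpoly)
  | QMul (p q : qpoly).

Fixpoint peval (p : qpoly) (x : R) : R :=
  match p with
  | QX => x
  | QC c => Q2R c
  | QAdd p q => peval p x + peval q x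
  | QMul p q => peval p x * peval q x
  end.

Fixpoint Cpeval (p : qpoly) (z : C) : C :=
  match p with
  | QX => z
  | QC c => RtoC (Q2R c)
  | QAdd p q => (Cpeval p z + Cpeval q z)%C
  | QMul p q => (Cpeval p z * Cpeval q z)%C
  end.

Lemma Cpeval_RtoC p x : Cpeval p (RtoC x) = RtoC (peval p x).
Proof.
  induction p as [| c | p IHp q IHq | p IHp q IHq]; simpl; auto.
  - now rewrite IHp, IHq, RtoC_plus.
  - now rewrite IHp, IHq, RtoC_mult.
Qed.

Definition QSub (p q : qpoly) : qpoly := QAdd p (QMul (QC (Qopp 1)) q).

Lemma peval_QSub p q x : peval (QSub p q) x = peval p x - peval q x.
Proof. simpl; rewrite Q2R_opp, Q2R_1; ring. Qed.

Lemma Cpeval_QSub p q z : Cpeval (QSub p q) z = (Cpeval p z - Cpeval q z)%C.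
Proof. simpl; rewrite Q2R_opp, Q2R_1, RtoC_opp; ring. Qed.

Fixpoint pcomp (p f : qpoly) : qpoly :=
  match p with
  | QX => f
  | QC c => QC c
  | QAdd p q => QAdd (pcomp p f) (pcomp q f)
  | QMul p q => QMul (pcomp p f) (pcomp q f)
  end.

Lemma peval_pcomp p f x : peval (pcomp p f) x = peval p (peval f x).
Proof. induction p; simpl; congruence. Qed.

Lemma Cpeval_pcomp p f z : Cpeval (pcomp p f) z = Cpeval p (Cpeval f z).
Proof. induction p; simpl; congruence. Qed.

Fixpoint qpow (p : qpoly) (n : nat) : qpoly :=
  match n with
  | O => QC 1
  | S n => QMul p (qpow p n)
  end.

Lemma Cpeval_qpow p n z : Cpeval (qpow p n) z = Cpow (Cpeval p z) n.
Proof. induction n; simpl; [now rewrite Q2R_1 | now rewrite IHn]. Qed.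

Definition real_rooted (p : qpoly) : Prop :=
  forall z, Cpeval p z = 0%C -> Im z = 0.

Definition nonneg_rooted (p : qpoly) : Prop :=
  forall z, Cpeval p z = 0%C -> Im z = 0 /\ 0 <= Re z.

Definition unit_rooted (p : qpoly) : Prop :=
  forall z, Cpeval p z = 0%C -> Im z = 0 /\ Re z * Re z <= 1.

Lemma Cmult_integral (z1 z2 : C) : (z1 * z2 = 0)%C -> z1 = 0%C \/ z2 = 0%C.
Proof.
  intro H.
  destruct (Ceq_dec z1 0) as [H1|H1]; [now left|].
  destruct (Ceq_dec z2 0) as [H2|H2]; [now right|].
  now destruct (Cmult_neq_0 z1 z2 H1 H2).
Qed.

Lemma C_square_root (w : C) : exists y : C, (y * y)%C = w.
Proof.
  destruct w as [p q].
  set (m := sqrt (p * p + q * q)).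
  assert (Hm : m * m = p * p + q * q) by (apply sqrt_sqrt; nra).
  assert (Hm0 : 0 <= m) by apply sqrt_pos.
  set (a := sqrt ((m + p) / 2)).
  set (b := sqrt ((m - p) / 2)).
  assert (Ha : a * a = (m + p) / 2) by (apply sqrt_sqrt; nra).
  assert (Hb : b * b = (m - p) / 2) by (apply sqrt_sqrt; nra).
  assert (Hab : (a * b) * (a * b) = (q / 2) * (q / 2)).
  { replace ((a * b) * (a * b)) with ((a * a) * (b * b)) by ring.
    rewrite Ha, Hb; nra. }
  assert (Hab0 : 0 <= a * b) by (apply Rmult_le_pos; apply sqrt_pos).
  destruct (Rle_or_lt 0 q).
  - exists (a, b); unfold Cmult; simpl; f_equal; nra.
  - exists (a, - b); unfold Cmult; simpl; f_equal; nra.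
Qed.

Definition pshift (p : qpoly) : qpoly := pcomp p (QSub QX (QC 1)).

Lemma peval_pshift p x : peval (pshift p) (x + 1) = peval p x.
Proof.
  unfold pshift; rewrite peval_pcomp, peval_QSub; simpl; rewrite Q2R_1.
  f_equal; ring.
Qed.

Lemma real_rooted_X : real_rooted QX.
Proof. intros z Hz; simpl in Hz; now rewrite Hz. Qed.

Lemma real_rooted_pshift p : real_rooted p -> real_rooted (pshift p).
Proof.
  intros Hp z Hz.
  unfold pshift in Hz; rewrite Cpeval_pcomp, Cpeval_QSub in Hz; simpl in Hz.
  apply Hp in Hz; destruct z as [a b]; simpl in *; lra.
Qed.

Fixpoint peven_odd (p : qpoly) : qpoly * qpoly :=
  match p with
  | QX => (QC 0, QC 1)
  | QC c => (QC c, QC 0)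
  | QAdd p q =>
      let (Ep, Op) := peven_odd p in let (Eq, Oq) := peven_odd q in
      (QAdd Ep Eq, QAdd Op Oq)
  | QMul p q =>
      let (Ep, Op) := peven_odd p in let (Eq, Oq) := peven_odd q in
      (QAdd (QMul Ep Eq) (QMul QX (QMul Op Oq)), QAdd (QMul Ep Oq) (QMul Op Eq))
  end.

Lemma Cpeval_peven_odd p y :
  Cpeval p y = (Cpeval (fst (peven_odd p)) (y * y) + y * Cpeval (snd (peven_odd p)) (y * y))%C.
Proof.
  induction p as [| c | p IHp q IHq | p IHp q IHq]; simpl.
  - rewrite Q2R_0, Q2R_1; ring.
  - rewrite Q2R_0; ring.
  - destruct (peven_odd p), (peven_odd q); simpl in *; rewrite IHp, IHq; ring.
  - destruct (peven_odd p), (peven_odd q); simpl in *; rewrite IHp, IHq; ring.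
Qed.

Definition graeffe (p : qpoly) : qpoly :=
  let (E, O) := peven_odd p in QSub (QMul E E) (QMul QX (QMul O O)).

Lemma Cpeval_graeffe p y : Cpeval (graeffe p) (y * y) = (Cpeval p y * Cpeval p (- y))%C.
Proof.
  unfold graeffe; rewrite (Cpeval_peven_odd p y), (Cpeval_peven_odd p (- y)).
  replace (- y * - y)%C with (y * y)%C by ring.
  destruct (peven_odd p); rewrite Cpeval_QSub; simpl; ring.
Qed.

Lemma nonneg_rooted_graeffe p : real_rooted p -> nonneg_rooted (graeffe p).
Proof.
  intros Hp w Hw.
  destruct (C_square_root w) as [y <-].
  rewrite Cpeval_graeffe in Hw.
  assert (Hy : Im y = 0).
  { destruct (Cmult_integral _ _ Hw) as [H|H]; apply Hp in H; [easy|].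
    destruct y; simpl in *; lra. }
  destruct y as [c d]; simpl in *; subst d; split; nra.
Qed.

Definition QOneSubX2 : qpoly := QSub (QC 1) (QMul QX QX).

Fixpoint phom (e : qpoly) : qpoly * nat :=
  match e with
  | QX => (QMul QX QX, 1%nat)
  | QC c => (QC c, 0%nat)
  | QAdd p q =>
      let (Ep, dp) := phom p in let (Eq, dq) := phom q in
      (QAdd (QMul Ep (qpow QOneSubX2 dq)) (QMul Eq (qpow QOneSubX2 dp)), (dp + dq)%nat)
  | QMul p q =>
      let (Ep, dp) := phom p in let (Eq, dq) := phom q in
      (QMul Ep Eq, (dp + dq)%nat)
  end.

Lemma Cpeval_phom e z w :
  (w * (1 - z * z) = z * z)%C ->
  (Cpeval e w * Cpow (1 - z * z) (snd (phom e)))%C = Cpeval (fst (phom e)) z.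
Proof.
  intro Hw.
  assert (HB : Cpeval QOneSubX2 z = (1 - z * z)%C).
  { unfold QOneSubX2; rewrite Cpeval_QSub; simpl; now rewrite Q2R_1. }
  induction e as [| c | p IHp q IHq | p IHp q IHq]; simpl.
  - now rewrite Cmult_1_r.
  - now rewrite Cmult_1_r.
  - destruct (phom p), (phom q); simpl in IHp, IHq |- *.
    rewrite !Cpeval_qpow, HB, <- IHp, <- IHq, Cpow_add_r; ring.
  - destruct (phom p), (phom q); simpl in IHp, IHq |- *.
    rewrite <- IHp, <- IHq, Cpow_add_r; ring.
Qed.

Lemma unit_rooted_phom e : nonneg_rooted e -> unit_rooted (fst (phom e)).
Proof.
  intros He z Hz.
  destruct (Ceq_dec (1 - z * z) 0) as [Hb|Hb].
  - destruct z as [a b]; unfold Cminus, Cmult, Cplus, Copp in Hb; simpl in *.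
    injection Hb as H1 H2; nra.
  - set (w := (z * z / (1 - z * z))%C).
    assert (Hw : (w * (1 - z * z) = z * z)%C) by (unfold w; field; exact Hb).
    rewrite <- (Cpeval_phom e z w Hw) in Hz.
    destruct (Cmult_integral _ _ Hz) as [Hew|Hpow];
      [| now destruct (Cpow_nz _ _ Hb Hpow)].
    destruct (He w Hew) as [Hwi Hwr].
    destruct w as [c d]; simpl in Hwi, Hwr; subst d.
    destruct z as [a b]; unfold Cminus, Cmult, Cplus, Copp in Hw; simpl in *.
    injection Hw as H1 H2.
    assert (Hab : a * b = 0) by nra.
    assert (b = 0) by (destruct (Rmult_integral _ _ Hab); nra).
    subst b; split; [reflexivity | nra].
Qed.

(* [v_sigma] maps the ratio [u = x / sqrt y] to [u'] with [u^2 = u'^2 / (1 - u'^2)]. *)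
Definition pvert (p : qpoly) : qpoly := fst (phom (graeffe p)).

Lemma unit_rooted_pvert p : real_rooted p -> unit_rooted (pvert p).
Proof. intro Hp; now apply unit_rooted_phom, nonneg_rooted_graeffe. Qed.

Lemma real_rooted_pvert p : real_rooted p -> real_rooted (pvert p).
Proof. intros Hp z Hz; now apply (unit_rooted_pvert p). Qed.

Lemma peval_pvert p x y : 0 < x -> 0 < y ->
  peval p (x / sqrt y) = 0 -> peval (pvert p) (x / sqrt (x * x + y)) = 0.
Proof.
  intros Hx Hy Hp.
  set (u := x / sqrt y); set (u' := x / sqrt (x * x + y)).
  assert (Hu : u * u = x * x / y).
  { unfold u; rewrite <- (sqrt_sqrt y) at 3 by lra; field.
    apply Rgt_not_eq, sqrt_lt_R0; lra. }
  assert (Hu' : u' * u' = x * x / (x * x + y)).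
  { unfold u'; rewrite <- (sqrt_sqrt (x * x + y)) at 3 by nra; field.
    apply Rgt_not_eq, sqrt_lt_R0; nra. }
  assert (Hw : (RtoC (u * u) * (1 - RtoC u' * RtoC u') = RtoC u' * RtoC u')%C).
  { rewrite <- !RtoC_mult, <- RtoC_minus, <- RtoC_mult; f_equal.
    rewrite Hu, Hu'; field; nra. }
  apply RtoC_inj.
  unfold pvert; rewrite <- Cpeval_RtoC, <- (Cpeval_phom _ _ _ Hw), RtoC_mult,
    Cpeval_graeffe, Cpeval_RtoC.
  fold u in Hp; rewrite Hp; ring.
Qed.

Lemma peval_quadratic p (a b c : Q) (s : R) : s * s = Q2R c ->
  exists A B : Q, peval p (Q2R a + Q2R b * s) = Q2R A + Q2R B * s /\
                  peval p (Q2R a - Q2R b * s) = Q2R A - Q2R B * s.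
Proof.
  intro Hs.
  induction p as [| d | p [A1 [B1 [H1 H2]]] q [A2 [B2 [H3 H4]]]
                   | p [A1 [B1 [H1 H2]]] q [A2 [B2 [H3 H4]]]]; simpl.
  - now exists a, b.
  - exists d, 0%Q; rewrite Q2R_0; split; ring.
  - exists (A1 + A2)%Q, (B1 + B2)%Q.
    rewrite H1, H2, H3, H4, !Q2R_plus; split; ring.
  - exists (A1 * A2 + B1 * B2 * c)%Q, (A1 * B2 + B1 * A2)%Q.
    rewrite H1, H2, H3, H4, !Q2R_plus, !Q2R_mult, <- Hs; split; ring.
Qed.

Lemma peval_conjugate_root p (a b c : Q) (s : R) :
  s * s = Q2R c -> ~ (exists r : Q, Q2R r * Q2R r = Q2R c) ->
  peval p (Q2R a + Q2R b * s) = 0 -> peval p (Q2R a - Q2R b * s) = 0.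
Proof.
  intros Hs Hc Hroot.
  destruct (peval_quadratic p a b c s Hs) as [A [B [Hplus ->]]].
  rewrite Hplus in Hroot.
  destruct (Req_dec (Q2R B) 0) as [HB|HB].
  - rewrite HB in Hroot |- *; lra.
  - exfalso; apply Hc; exists (- A / B)%Q.
    assert (HB' : ~ (B == 0)%Q) by (intro E; apply HB; rewrite E; apply Q2R_0).
    rewrite Q2R_div, Q2R_opp by exact HB'.
    replace (- Q2R A / Q2R B) with s by (field_simplify_eq; lra).
    exact Hs.
Qed.

Lemma sgn_pos x : 0 < x -> sgn x = 1.
Proof. intro; unfold sgn; destruct (Rlt_dec 0 x); lra. Qed.

Lemma sgn_neg x : x < 0 -> sgn x = -1.
Proof. intro; unfold sgn; destruct (Rlt_dec 0 x), (Rlt_dec x 0); lra. Qed.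

Lemma sgn_0 : sgn 0 = 0.
Proof. unfold sgn; destruct (Rlt_dec 0 0); [lra|]; destruct (Rlt_dec 0 0); lra. Qed.

Lemma sigma_pos x : 0 < x -> sigma x = x * x.
Proof. intro; unfold sigma; rewrite sgn_pos; [ring | lra]. Qed.

Lemma sigma_0 : sigma 0 = 0.
Proof. unfold sigma; rewrite sgn_0; ring. Qed.

Lemma sigma_nonneg x : 0 <= x -> 0 <= sigma x.
Proof.
  intro; destruct (Req_dec x 0) as [->|]; [rewrite sigma_0; lra|].
  rewrite sigma_pos; nra.
Qed.

Lemma sigma_nonpos x : x <= 0 -> sigma x <= 0.
Proof.
  intro; destruct (Req_dec x 0) as [->|]; [rewrite sigma_0; lra|].
  unfold sigma; rewrite sgn_neg; nra.
Qed.

Lemma sigma_inv_pos y : 0 < y -> sigma_inv y = sqrt y.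
Proof. intro; unfold sigma_inv; rewrite sgn_pos, Rabs_pos_eq; lra. Qed.

Lemma sigma_inv_0 : sigma_inv 0 = 0.
Proof. unfold sigma_inv; rewrite sgn_0; ring. Qed.

Lemma sigma_inv_nonneg y : 0 <= y -> 0 <= sigma_inv y.
Proof.
  intro; destruct (Req_dec y 0) as [->|]; [rewrite sigma_inv_0; lra|].
  rewrite sigma_inv_pos by lra; apply sqrt_pos.
Qed.

Lemma sigma_inv_nonpos y : y <= 0 -> sigma_inv y <= 0.
Proof.
  intro; destruct (Req_dec y 0) as [->|]; [rewrite sigma_inv_0; lra|].
  unfold sigma_inv; rewrite sgn_neg by lra; pose proof (sqrt_pos (Rabs y)); lra.
Qed.

Lemma word_map_invariant (P : R * R -> Prop) (f g : R * R -> R * R) :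
  (forall p, P p -> P (f p)) -> (forall p, P p -> P (g p)) ->
  forall w p, P p -> P (word_map f g w p).
Proof. intros Hf Hg w; induction w as [|[|] w IH]; simpl; auto. Qed.

Lemma Ox_orbit_left w q :
  Ox q -> fst q < 0 -> fst (word_map h_sigma v_sigma w q) <= 0.
Proof.
  intros Hq Hx.
  apply (word_map_invariant (fun p => fst p <= 0 /\ snd p <= 0)); [| | unfold Ox in Hq; lra].
  - intros [x y]; simpl; pose proof (sigma_inv_nonpos y); lra.
  - intros [x y]; simpl; pose proof (sigma_nonpos x); lra.
Qed.

Lemma Oy_inverse_orbit w q :
  Oy q -> fst (word_map h_sigma_inv v_sigma_inv w q) <= 0 \/
          snd (word_map h_sigma_inv v_sigma_inv w q) <= 0.
Proof.
  unfold Oy; intro Hq; destruct (Rle_or_lt 0 (snd q)).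
  - left; apply (word_map_invariant (fun p => fst p <= 0 /\ 0 <= snd p)); [| | lra].
    + intros [x y]; simpl; pose proof (sigma_inv_nonneg y); lra.
    + intros [x y]; simpl; pose proof (sigma_nonpos x); lra.
  - right; apply (word_map_invariant (fun p => 0 <= fst p /\ snd p <= 0)); [| | lra].
    + intros [x y]; simpl; pose proof (sigma_inv_nonpos y); lra.
    + intros [x y]; simpl; pose proof (sigma_nonneg x); lra.
Qed.

Definition real_rooted_ratio (p : R * R) : Prop :=
  (snd p = 0 /\ 0 <= fst p) \/
  (0 < fst p /\ 0 < snd p /\
   exists e, real_rooted e /\ peval e (fst p / sqrt (snd p)) = 0).

Lemma real_rooted_ratio_h p : real_rooted_ratio p -> real_rooted_ratio (h_sigma p).
Proof.
  destruct p as [x y]; unfold real_rooted_ratio, h_sigma; simpl.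
  intros [[-> Hx] | [Hx [Hy [e [He Hroot]]]]].
  - left; rewrite sigma_inv_0; lra.
  - assert (Hs : 0 < sqrt y) by (apply sqrt_lt_R0; lra).
    right; rewrite sigma_inv_pos by exact Hy.
    split; [lra|]; split; [exact Hy|].
    exists (pshift e); split; [now apply real_rooted_pshift|].
    replace ((x + sqrt y) / sqrt y) with (x / sqrt y + 1) by (field; lra).
    now rewrite peval_pshift.
Qed.

Lemma real_rooted_ratio_v p : real_rooted_ratio p -> real_rooted_ratio (v_sigma p).
Proof.
  destruct p as [x y]; unfold real_rooted_ratio, v_sigma; simpl.
  intros [[-> Hx] | [Hx [Hy [e [He Hroot]]]]].
  - destruct (Req_dec x 0) as [->|Hx0]; [left; rewrite sigma_0; lra|].
    right; rewrite sigma_pos by lra.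
    split; [lra|]; split; [nra|].
    exists (pshift QX); split; [apply real_rooted_pshift, real_rooted_X|].
    rewrite Rplus_0_r, sqrt_square by lra.
    replace (x / x) with (0 + 1) by (field; lra).
    now rewrite peval_pshift.
  - right; rewrite sigma_pos by exact Hx.
    split; [exact Hx|]; split; [nra|].
    exists (pvert e); split; [now apply real_rooted_pvert|].
    now apply peval_pvert.
Qed.

Lemma Ox_orbit_real_rooted_ratio w q :
  Ox q -> 0 <= fst q -> real_rooted_ratio (word_map h_sigma v_sigma w q).
Proof.
  intros Hq Hx; apply word_map_invariant;
    [exact real_rooted_ratio_h | exact real_rooted_ratio_v | now left].
Qed.

Lemma Ox_orbit_small_ratio w q x y :
  Ox q -> 0 <= fst q -> word_map h_sigma v_sigma w q = (x, y) ->
  0 < x -> x * x < y ->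
  exists e, unit_rooted e /\ peval e (x / sqrt y) = 0.
Proof.
  intros Hq Hq0 Hp Hx Hxy.
  destruct w as [|[|] w]; simpl in Hp.
  - unfold Ox in Hq; rewrite Hp in Hq; simpl in Hq; nra.
  - pose proof (Ox_orbit_real_rooted_ratio w q Hq Hq0) as Hinv.
    destruct (word_map h_sigma v_sigma w q) as [x' y']; unfold h_sigma in Hp; simpl in *.
    injection Hp as <- <-.
    unfold real_rooted_ratio in Hinv; simpl in Hinv.
    exfalso; destruct Hinv as [[-> _] | [Hx' [Hy _]]]; [nra|].
    rewrite sigma_inv_pos in Hxy by exact Hy.
    rewrite <- (sqrt_sqrt y') in Hxy at 3 by lra.
    pose proof (sqrt_pos y'); nra.
  - pose proof (Ox_orbit_real_rooted_ratio w q Hq Hq0) as Hinv.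
    destruct (word_map h_sigma v_sigma w q) as [x' y']; unfold v_sigma in Hp; simpl in *.
    injection Hp as <- <-.
    rewrite sigma_pos in Hxy |- * by exact Hx.
    unfold real_rooted_ratio in Hinv; simpl in Hinv.
    destruct Hinv as [[? _] | [_ [Hy [e [He Hroot]]]]]; [lra|].
    exists (pvert e); split; [now apply unit_rooted_pvert | now apply peval_pvert].
Qed.

Lemma quadratic_ratio_not_root (x0 y0 : R) (a b c : Q) (e : qpoly) :
  0 < x0 -> x0 * x0 < y0 ->
  y0 = Q2R c -> ~ (exists r : Q, Q2R r * Q2R r = y0) ->
  x0 = Q2R a + Q2R b * sqrt y0 -> 1 <= Rabs (Q2R b) ->
  unit_rooted e -> peval e (x0 / sqrt y0) <> 0.
Proof.
  intros Hx Hxy Hc Hirr Hab Hb He Hroot.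
  assert (Hs : 0 < sqrt y0) by (apply sqrt_lt_R0; nra).
  assert (Hss : sqrt y0 * sqrt y0 = Q2R c) by (rewrite sqrt_sqrt; nra).
  assert (Hc0 : ~ (c == 0)%Q) by (intro E; rewrite E, Q2R_0 in Hc; nra).
  assert (Hu : x0 / sqrt y0 = Q2R b + Q2R (a / c) * sqrt y0).
  { rewrite Q2R_div, <- Hss, Hab by exact Hc0; field; lra. }
  assert (Hu1 : x0 / sqrt y0 < 1).
  { apply Rmult_lt_reg_r with (sqrt y0); [exact Hs|].
    replace (x0 / sqrt y0 * sqrt y0) with x0 by (field; lra); nra. }
  assert (Hu0 : 0 < x0 / sqrt y0) by (apply Rdiv_lt_0_compat; lra).
  rewrite Hu in Hroot.
  apply (peval_conjugate_root _ _ _ c _ Hss) in Hroot; [| now rewrite <- Hc].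
  destruct (He (RtoC (Q2R b - Q2R (a / c) * sqrt y0))) as [_ Hle].
  { now rewrite Cpeval_RtoC, Hroot. }
  simpl in Hle.
  replace (Q2R b - Q2R (a / c) * sqrt y0) with (2 * Q2R b - x0 / sqrt y0) in Hle by lra.
  unfold Rabs in Hb; destruct (Rcase_abs (Q2R b)); nra.
Qed.

Theorem sigma_irrational_quadratic (x0 y0 : R) (a b c : Q) :
  0 < x0 -> x0 * x0 < y0 ->
  y0 = Q2R c -> ~ (exists r : Q, Q2R r * Q2R r = y0) ->
  x0 = Q2R a + Q2R b * sqrt y0 -> 1 <= Rabs (Q2R b) ->
  sigma_irrational (x0, y0).
Proof.
  intros Hx Hxy Hc Hirr Hab Hb.
  intros [Hon | [Hon | [[w [q [Hq Hp]]] | [w [q [Hq Hp]]]]]].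
  - unfold Ox in Hon; simpl in Hon; nra.
  - unfold Oy in Hon; simpl in Hon; lra.
  - destruct (Rle_or_lt 0 (fst q)) as [Hq0|Hq0].
    + destruct (Ox_orbit_small_ratio w q x0 y0 Hq Hq0 (eq_sym Hp) Hx Hxy) as [e [He Hroot]].
      exact (quadratic_ratio_not_root x0 y0 a b c e Hx Hxy Hc Hirr Hab Hb He Hroot).
    + pose proof (Ox_orbit_left w q Hq Hq0) as Hleft.
      rewrite <- Hp in Hleft; simpl in Hleft; lra.
  - destruct (Oy_inverse_orbit w q Hq) as [Hquad|Hquad];
      rewrite <- Hp in Hquad; simpl in Hquad; nra.
Qed.

Lemma sq_ne_twice_sq (n d : Z) : d <> 0%Z -> (n * n <> 2 * d * d)%Z.
Proof.
  remember (Z.abs_nat d) as m eqn:Hm; revert n d Hm.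
  induction m as [m IH] using Wf_nat.lt_wf_ind; intros n d Hm Hd Hnd.
  destruct (Z.Even_or_Odd n) as [[k ->]|[k ->]]; [|nia].
  destruct (Z.Even_or_Odd d) as [[j ->]|[j ->]]; [|nia].
  apply (IH (Z.abs_nat j) ltac:(lia) k j); lia.
Qed.

Lemma sqrt2_irrational : ~ (exists r : Q, Q2R r * Q2R r = 2).
Proof.
  intros [[n d] H]; unfold Q2R in H; simpl in H.
  assert (Hd : IZR (Z.pos d) <> 0) by (apply not_0_IZR; lia).
  apply (sq_ne_twice_sq n (Z.pos d)); [lia|].
  apply eq_IZR; rewrite !mult_IZR.
  transitivity (IZR n * / IZR (Z.pos d) * (IZR n * / IZR (Z.pos d)) * IZR (Z.pos d) * IZR (Z.pos d)).
  - field; exact Hd.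
  - rewrite H; ring.
Qed.

Theorem lemma7 :
  (forall x0 y0 : R, 0 < x0 -> 0 < y0 ->
    (exists q : Q, y0 = Q2R q /\ ~ (exists r : Q, Q2R r * Q2R r = y0)) ->
    (exists a0 b0 : Q, x0 = Q2R a0 + Q2R b0 * sqrt y0 /\
                       Q2R a0 <> 0 /\ 1 <= Rabs (Q2R b0)) ->
    y0 > x0 ^ 2 ->
    sigma_irrational (x0, y0))
  /\ sigma_irrational (-1 + sqrt 2, 2).
Proof.
  split.
  - intros x0 y0 Hx _ [c [Hc Hirr]] [a [b [Hab [_ Hb]]]] Hxy.
    apply (sigma_irrational_quadratic x0 y0 a b c); [exact Hx | nra | assumption..].
  - assert (Hs1 : 1 < sqrt 2) by (rewrite <- sqrt_1; apply sqrt_lt_1; lra).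
    assert (Hs2 : sqrt 2 * sqrt 2 = 2) by (apply sqrt_sqrt; lra).
    apply (sigma_irrational_quadratic _ _ (Qopp 1) 1 2); [lra | nra | | | | ].
    + unfold Q2R; simpl; lra.
    + exact sqrt2_irrational.
    + rewrite Q2R_opp, Q2R_1; ring.
    + rewrite Q2R_1, Rabs_R1; lra.
Qed.
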